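(* Let $\gamma_n:[0,1]\to\mathbb{R}^d$ be curves in $W^{2,2}([0,1];\mathbb{R}^d)$, each with constant positive speed $|\gamma_n'|$, converging uniformly to a curve $\gamma:[0,1]\to\mathbb{R}^d$, and assume $$\sup_n|\gamma_n'|<+\infty,\qquad \sup_n\int_0^1|\kappa_{\gamma_n}|^2\,ds<+\infty.$$ Then $L(\gamma)=\lim_{n\to\infty}L(\gamma_n)$.
   Context: For a curve $\gamma$, $L(\gamma)$ denotes its length, i.e. its total variation $\sup\sum_j|\gamma(t_j)-\gamma(t_{j-1})|$ over partitions of $[0,1]$. For a constant-speed curve $\gamma_n$ with speed $|\gamma_n'|>0$, its curvature is $\kappa_{\gamma_n}=|\gamma_n'|^{-1}\frac{d}{ds}\big(\frac{\gamma_n'}{|\gamma_n'|}\big)=\gamma_n''/|\gamma_n'|^2$. *)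

From HB Require Import structures.
From mathcomp Require Import all_boot all_order all_algebra.
From mathcomp Require Import all_classical all_reals all_analysis.
Set Implicit Arguments. Unset Strict Implicit. Unset Printing Implicit Defensive.
Import Order.TTheory GRing.Theory Num.Theory.
Import numFieldNormedType.Exports.
Local Open Scope classical_set_scope.
Local Open Scope ring_scope.

Section Defs.
Variables (R : realType) (d : nat).
Notation V := 'rV[R]_d.

Definition enorm (v : V) : R := Num.sqrt (\sum_(i < d) v ord0 i ^+ 2).

Definition comp (f : R -> V) (i : 'I_d) : R -> R := fun t => f t ord0 i.

Definition primitive01 (f F : R -> V) : Prop :=
  forall i : 'I_d,
    (@lebesgue_measure R).-integrable `[0%R, 1%R] (fun x => (comp f i x)%:E) /\
    forall t, 0 <= t <= 1 ->
      (comp F i t)%:E = (comp F i 0)%:E +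
        (\int[@lebesgue_measure R]_(x in `[0%R, t]) (comp f i x)%:E)%E.

(* gamma in W^{2,2}([0,1];R^d), with g1 = gamma' (continuous representative)
   and g2 = gamma'' (an L^2 representative) *)
Definition W22 (gamma g1 g2 : R -> V) : Prop :=
  primitive01 g1 gamma /\ primitive01 g2 g1 /\
  forall i : 'I_d,
    (@lebesgue_measure R).-integrable `[0%R, 1%R] (fun x => (comp g2 i x ^+ 2)%:E).

(* int_0^1 |kappa|^2 ds with kappa = gamma'' / |gamma'|^2 *)
Definition curv_energy (g1 g2 : R -> V) : \bar R :=
  (\int[@lebesgue_measure R]_(x in `[0%R, 1%R])
     ((enorm (g2 x) / enorm (g1 x) ^+ 2) ^+ 2)%:E)%E.

Definition partition01 (n : nat) (t : nat -> R) : Prop :=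
  t 0%N = 0 /\ t n = 1 /\ forall j, (j < n)%N -> t j <= t j.+1.

Definition var_sum (gamma : R -> V) (n : nat) (t : nat -> R) : R :=
  \sum_(j < n) enorm (gamma (t j.+1) - gamma (t j)).

Definition curve_length (gamma : R -> V) : \bar R :=
  ereal_sup [set x | exists n t, partition01 n t /\ x = (var_sum gamma n t)%:E].

End Defs.

From Pilot Require Import Defs.
From HB Require Import structures.
From mathcomp Require Import all_boot all_order all_algebra.
From mathcomp Require Import all_classical all_reals all_analysis.
From mathcomp Require Import ring lra measurable_realfun.
Import Order.TTheory GRing.Theory Num.Theory.
Import numFieldNormedType.Exports.
Local Open Scope classical_set_scope.
Local Open Scope ring_scope.

(* A constant-speed curve with speed c has length exactly c: every
   chord satisfies |gam(t) - gam(s)| <= c (t - s), and conversely, writing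
   E = int_0^1 |gam''|^2, the velocity is 1/2-Hoelder, |v(x) - v(s)|^2 <= (x-s) E,
   so testing the chord against v(s) gives c |gam(t) - gam(s)| >=
   (t-s) (c^2 - (t-s) E / 2).  On the uniform partition into m pieces this
   yields variation sums >= c - E / (2 c m), and since |kappa| = |gam''| / c^2,
   E <= K c^4 <= K M^3 c.  Hence the variation sums of gam_n on the uniform
   partitions approach c_n = L(gam_n) uniformly in n, while uniform convergence
   makes each variation sum of gam_n converge to that of gamma; a squeeze then
   identifies lim c_n with the supremum L(gamma). *)

Section RealIntegrals.
Context {R : realType}.
Notation mu := (@lebesgue_measure R).
Notation RT := (measurableTypeR R).

Lemma integrableRD {D : set RT} (mD : measurable D) {f g : R -> R} :
  mu.-integrable D (EFin \o f) -> mu.-integrable D (EFin \o g) ->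
  mu.-integrable D (EFin \o (fun x => f x + g x)).
Proof.
move=> hf hg; have := integrableD mD hf hg.
by apply: (eq_integrable mD) => x _; rewrite /= EFinD.
Qed.

Lemma integrableRZ {D : set RT} (mD : measurable D) (k : R) {f : R -> R} :
  mu.-integrable D (EFin \o f) ->
  mu.-integrable D (EFin \o (fun x => k * f x)).
Proof.
move=> hf; have := integrableZl mD k hf.
by apply: (eq_integrable mD) => x _; rewrite /= EFinM.
Qed.

Lemma Rintegral_big {I : eqType} {D : set RT} (mD : measurable D)
    (s : seq I) (F : I -> R -> R) :
  (forall i, mu.-integrable D (EFin \o F i)) ->
  mu.-integrable D (EFin \o (fun x => \sum_(i <- s) F i x)) /\
  \int[mu]_(x in D) (\sum_(i <- s) F i x) = \sum_(i <- s) \int[mu]_(x in D) F i x.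
Proof.
move=> hF; elim: s => [|a s [IH1 IH2]].
  rewrite big_nil; under eq_fun do rewrite big_nil.
  by split; [exact: integrable0 | rewrite Rintegral_cst// mul0r].
under eq_fun do rewrite big_cons.
by rewrite big_cons; split; [exact: integrableRD | rewrite RintegralD// IH2].
Qed.

Lemma integrable_itv_cst (s t k : R) :
  mu.-integrable (`[s, t] : set RT) (EFin \o (fun _ => k)).
Proof.
apply/integrableP; split; first exact/measurable_EFinP/measurable_cst.
rewrite (eq_integral (cst `|k|%:E)) // integral_cst//.
have := lebesgue_measure_itv `[s, t]%R => /= ->.
by case: ifP => _; rewrite ?mule0 ?ltry// -EFinD -EFinM ltry.
Qed.

Lemma Rintegral_itv_cst (s t k : R) : s <= t ->
  \int[mu]_(x in (`[s, t] : set RT)) k = k * (t - s).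
Proof.
move=> st; rewrite Rintegral_cst//.
have := lebesgue_measure_itv `[s, t]%R => /= ->.
rewrite lte_fin; case: ltgtP st => // -> _.
by rewrite subrr mulr0.
Qed.

Lemma integrable_subitv {f : R -> R} {s t : R} : 0 <= s -> t <= 1 ->
  mu.-integrable (`[0, 1] : set RT) (EFin \o f) ->
  mu.-integrable (`[s, t] : set RT) (EFin \o f).
Proof.
move=> s0 t1; apply: integrableS => //.
by apply: subset_itv; rewrite bnd_simp.
Qed.

Lemma in_unit_itv {s t x : R} : 0 <= s -> t <= 1 ->
  (`[s, t]%classic : set RT) x -> 0 <= x <= 1.
Proof.
move=> s0 t1; rewrite /= in_itv /= => /andP[sx xt].
by rewrite (le_trans s0 sx) (le_trans xt t1).
Qed.

Lemma Rintegral_subitv_le (f : R -> R) (s t : R) : 0 <= s -> t <= 1 ->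
  mu.-integrable (`[0, 1] : set RT) (EFin \o f) -> (forall x, 0 <= f x) ->
  \int[mu]_(x in (`[s, t] : set RT)) f x <= \int[mu]_(x in (`[0, 1] : set RT)) f x.
Proof.
move=> s0 t1 hf f0.
have hst : mu.-integrable (`[s, t] : set RT) (EFin \o f) by exact: integrable_subitv.
rewrite /Rintegral fine_le //; [exact: integrable_fin_num hst|
  exact: integrable_fin_num hf|].
apply: ge0_subset_integral => //.
- by case/integrableP: hf.
- by move=> x _; rewrite lee_fin.
- by apply: subset_itv; rewrite bnd_simp.
Qed.

Lemma primitive_increment {f F : R -> R} :
  mu.-integrable (`[0, 1] : set RT) (fun x => (f x)%:E) ->
  (forall t, 0 <= t <= 1 -> (F t)%:E = (F 0)%:E +
        (\int[mu]_(x in `[0%R, t]) (f x)%:E)%E) ->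
  forall s t, 0 <= s -> s <= t -> t <= 1 ->
  F t - F s = \int[mu]_(x in (`[s, t] : set RT)) f x.
Proof.
move=> hf hF.
have Fval t : 0 <= t <= 1 -> F t = F 0 + \int[mu]_(x in (`[0, t] : set RT)) f x.
  move=> /andP[t0 t1]; move: (hF t); rewrite t0 t1 => /(_ isT).
  have ht : mu.-integrable (`[0, t] : set RT) (EFin \o f) by exact: integrable_subitv.
  by rewrite -(fineK (integrable_fin_num _ ht)) //= -EFinD => -[].
move=> s t s0 st t1.
rewrite (Fval t) ?(le_trans s0 st) ?t1 // (Fval s) ?s0 ?(le_trans st t1) //.
rewrite opprD addrACA subrr add0r.
rewrite (@Rintegral_itvB _ f (BLeft 0) (BRight t) s) ?bnd_simp //.
  rewrite Rintegral_itv_obnd_cbnd //.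
  by apply: integrableS hf => //; apply: subset_itv; rewrite bnd_simp.
exact: integrable_subitv.
Qed.

(* Cauchy-Schwarz inequality for integrals: (int_s^t f)^2 <= (t-s) int_s^t f^2.
   It follows from 0 <= int_s^t (f - k)^2 with k the mean value of f. *)
Lemma Rintegral_sqr_le {f : R -> R} {s t : R} : s < t ->
  mu.-integrable (`[s, t] : set RT) (EFin \o f) ->
  mu.-integrable (`[s, t] : set RT) (EFin \o (fun x => f x ^+ 2)) ->
  (\int[mu]_(x in (`[s, t] : set RT)) f x) ^+ 2 <=
  (t - s) * \int[mu]_(x in (`[s, t] : set RT)) (f x ^+ 2).
Proof.
move=> st hf hf2; have mI : measurable (`[s, t] : set RT) by [].
set X := \int[mu]_(x in _) f x; set A := \int[mu]_(x in _) (f x ^+ 2).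
have h0 : 0 < t - s by rewrite subr_gt0.
set k := X / (t - s).
have hlin : mu.-integrable (`[s, t] : set RT) (EFin \o (fun x => (- 2 * k) * f x + k ^+ 2)).
  by apply: integrableRD => //; [exact: integrableRZ | exact: integrable_itv_cst].
have : 0 <= \int[mu]_(x in (`[s, t] : set RT)) (f x - k) ^+ 2.
  by apply: Rintegral_ge0 => x _; exact: sqr_ge0.
have -> : \int[mu]_(x in (`[s, t] : set RT)) (f x - k) ^+ 2 =
          \int[mu]_(x in (`[s, t] : set RT)) (f x ^+ 2 + ((- 2 * k) * f x + k ^+ 2)).
  by apply: eq_Rintegral => x _; ring.
rewrite RintegralD // RintegralD //; last 2 first.
- exact: integrableRZ.
- exact: integrable_itv_cst.
rewrite RintegralZl // Rintegral_itv_cst ?(ltW st) // -/X -/A.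
have -> : A + (- 2 * k * X + k ^+ 2 * (t - s)) = A - X ^+ 2 / (t - s).
  by rewrite /k; field; rewrite gt_eqF.
by rewrite subr_ge0 ler_pdivrMr // mulrC.
Qed.

End RealIntegrals.

Section EuclideanNorm.
Context {R : realType} {d : nat}.
Notation V := 'rV[R]_d.
Implicit Types u v w x y : V.

Definition dot u v : R := \sum_(i < d) u ord0 i * v ord0 i.

Lemma enorm_ge0 v : 0 <= enorm v.
Proof. exact: sqrtr_ge0. Qed.

Lemma enorm_sq v : enorm v ^+ 2 = \sum_(i < d) v ord0 i ^+ 2.
Proof. by rewrite sqr_sqrtr // sumr_ge0 // => i _; exact: sqr_ge0. Qed.

Lemma dot_self u : dot u u = enorm u ^+ 2.
Proof. by rewrite enorm_sq; apply: eq_bigr => i _; rewrite expr2. Qed.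

Lemma enorm_sq_comb p q x y w :
  (forall i, w ord0 i = p * x ord0 i + q * y ord0 i) ->
  enorm w ^+ 2 = p ^+ 2 * enorm x ^+ 2 + 2 * p * q * dot x y + q ^+ 2 * enorm y ^+ 2.
Proof.
move=> hw; rewrite !enorm_sq /dot !mulr_sumr -!big_split /=.
by apply: eq_bigr => i _; rewrite hw; ring.
Qed.

Lemma enorm_sq_add x y :
  enorm (x + y) ^+ 2 = enorm x ^+ 2 + 2 * dot x y + enorm y ^+ 2.
Proof.
rewrite (@enorm_sq_comb 1 1 x y); first by ring.
by move=> i; rewrite mxE !mul1r.
Qed.

Lemma enorm_sq_sub x y :
  enorm (x - y) ^+ 2 = enorm x ^+ 2 + enorm y ^+ 2 - 2 * dot x y.
Proof.
rewrite (@enorm_sq_comb 1 (-1) x y); first by ring.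
by move=> i; rewrite !mxE mul1r mulN1r.
Qed.

Lemma enorm_eq0_coord {u} : enorm u = 0 -> forall i, u ord0 i = 0.
Proof.
move=> h i; have : \sum_(j < d) u ord0 j ^+ 2 == 0 by rewrite -enorm_sq h expr0n.
rewrite psumr_eq0 => [/allP/(_ i (mem_index_enum _))|j _]; last exact: sqr_ge0.
by rewrite /= sqrf_eq0 => /eqP.
Qed.

(* Cauchy-Schwarz: for a, b the norms of u, v, expanding 0 <= |b u - a v|^2
   gives 2ab (ab - u.v) >= 0. *)
Lemma dot_le u v : dot u v <= enorm u * enorm v.
Proof.
have [a0|a0] := eqVneq (enorm u) 0.
  by rewrite a0 mul0r /dot big1 // => i _; rewrite (enorm_eq0_coord a0) mul0r.
have [b0|b0] := eqVneq (enorm v) 0.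
  by rewrite b0 mulr0 /dot big1 // => i _; rewrite (enorm_eq0_coord b0) mulr0.
have ab : 0 < enorm u * enorm v by rewrite mulr_gt0 // lt0r ?a0 ?b0 enorm_ge0.
have := sqr_ge0 (enorm (enorm v *: u - enorm u *: v)).
rewrite (@enorm_sq_comb (enorm v) (- enorm u) u v); last first.
  by move=> i; rewrite !mxE mulNr.
rewrite sqrrN => h.
have : 0 <= 2 * (enorm u * enorm v) * (enorm u * enorm v - dot u v) by lra.
by rewrite pmulr_rge0 ?subr_ge0 // mulr_gt0.
Qed.

Lemma enorm_triangle x y : enorm (x + y) <= enorm x + enorm y.
Proof.
rewrite -(ler_pXn2r (n := 2)) ?nnegrE ?addr_ge0 ?enorm_ge0 //.
by rewrite enorm_sq_add; have := dot_le x y; nra.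
Qed.

Lemma enorm_distC x y : enorm (x - y) = enorm (y - x).
Proof.
by rewrite /enorm; congr Num.sqrt; apply: eq_bigr => i _; rewrite !mxE -sqrrN opprB.
Qed.

Lemma enorm_dist_le x y : `|enorm x - enorm y| <= enorm (x - y).
Proof.
have := enorm_triangle y (x - y); have := enorm_triangle x (y - x).
rewrite enorm_distC !(addrC _ (_ - _)) !subrK => h1 h2.
by rewrite ler_norml; apply/andP; split; lra.
Qed.

End EuclideanNorm.

Lemma exists_frac_le {R : realType} {B e : R} : 0 <= B -> 0 < e ->
  exists m, (0 < m)%N /\ B / m%:R <= e.
Proof.
move=> B0 e0; exists (Num.truncn (B / e)).+1; split => //.
have := truncnS_gt (B / e); set m := (Num.truncn _).+1 => hm.
by rewrite ler_pdivrMr ?ltr0n // -ler_pdivrMl // mulrC ltW.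
Qed.

Section Partitions.
Context {R : realType} {d : nat}.
Notation V := 'rV[R]_d.

Lemma partition_mono {n} {t : nat -> R} : partition01 n t ->
  forall j k, (j <= k)%N -> (k <= n)%N -> t j <= t k.
Proof.
move=> [_ [_ ht]] j k; elim: k => [|k IH]; first by rewrite leqn0 => /eqP ->.
rewrite leq_eqVlt => /orP[/eqP -> //|jk] kn.
exact: le_trans (IH jk (ltnW kn)) (ht _ kn).
Qed.

Lemma partition_in {n} {t : nat -> R} : partition01 n t ->
  forall j, (j <= n)%N -> 0 <= t j <= 1.
Proof.
move=> hp j jn; have [h0 [h1 _]] := hp.
by rewrite -{1}h0 -h1 !(partition_mono hp).
Qed.

Lemma partition_step {n} {t : nat -> R} : partition01 n t ->
  forall j, (j < n)%N -> [/\ 0 <= t j, t j <= t j.+1 & t j.+1 <= 1].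
Proof.
move=> hp j jn; have [_ [_ hle]] := hp.
have /andP[-> _] := partition_in hp _ (ltnW jn).
by have /andP[_ ->] := partition_in hp _ jn; rewrite hle.
Qed.

Lemma partition_telescope {n} {t : nat -> R} : partition01 n t ->
  \sum_(j < n) (t j.+1 - t j) = 1.
Proof.
move=> [h0 [h1 _]].
by rewrite -(big_mkord xpredT (fun j => t j.+1 - t j)) telescope_sumr // h0 h1 subr0.
Qed.

Definition unif (m : nat) (j : nat) : R := j%:R / m%:R.

Lemma unif_partition {m} : (0 < m)%N -> partition01 m (unif m).
Proof.
move=> m0; split; first by rewrite /unif mul0r.
split; first by rewrite /unif divff // pnatr_eq0 -lt0n.
by move=> j _; rewrite /unif ler_pM2r ?invr_gt0 ?ltr0n // ler_nat.
Qed.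

Lemma unif_step {m} j : (0 < m)%N -> unif m j.+1 - unif m j = m%:R^-1.
Proof. by move=> m0; rewrite /unif -mulrBl -natrB // subSnn mul1r. Qed.

Lemma var_sum_ge0 (g : R -> V) n t : 0 <= var_sum g n t.
Proof. by apply: sumr_ge0 => j _; exact: enorm_ge0. Qed.

Lemma var_sum_close {f g : R -> V} {e : R} {n t} : partition01 n t ->
  (forall x, 0 <= x <= 1 -> enorm (f x - g x) <= e) ->
  `|var_sum f n t - var_sum g n t| <= n%:R * (2 * e).
Proof.
move=> hp he; rewrite /var_sum -sumrB.
apply: le_trans (ler_norm_sum _ _ _) _.
have -> : n%:R * (2 * e) = \sum_(j < n) (e + e).
  by rewrite sumr_const card_ord -mulr_natl; ring.
apply: ler_sum => j _.
apply: le_trans (enorm_dist_le _ _) _.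
have -> : f (t j.+1) - f (t j) - (g (t j.+1) - g (t j)) =
   (f (t j.+1) - g (t j.+1)) + (g (t j) - f (t j)).
  by rewrite opprB addrACA [RHS]addrACA (addrC (- g _)).
apply: le_trans (enorm_triangle _ _) _.
rewrite [enorm (g _ - _)]enorm_distC.
by apply: lerD; apply: he; apply: (partition_in hp); rewrite // ltnW.
Qed.

Lemma curve_length_ge (g : R -> V) {n t} : partition01 n t ->
  ((var_sum g n t)%:E <= curve_length g)%E.
Proof. by move=> hp; apply: ereal_sup_ubound; exists n, t. Qed.

Lemma curve_length_le {g : R -> V} {M : R} :
  (forall n t, partition01 n t -> var_sum g n t <= M) ->
  (curve_length g <= M%:E)%E.
Proof. by move=> hM; apply: ge_ereal_sup => _ [n [t [hp ->]]]; rewrite lee_fin hM. Qed.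

End Partitions.

Definition acc_energy {R : realType} {d : nat} (a : R -> 'rV[R]_d) : R :=
  \sum_(i < d) \int[@lebesgue_measure R]_(x in (`[0, 1] : set (measurableTypeR R)))
     (Defs.comp a i x ^+ 2).

Lemma acc_energy_ge0 {R : realType} {d : nat} (a : R -> 'rV[R]_d) : 0 <= acc_energy a.
Proof. by apply: sumr_ge0 => i _; apply: Rintegral_ge0 => x _; exact: sqr_ge0. Qed.

Section ConstantSpeed.
Context {R : realType} {d : nat}.
Notation mu := (@lebesgue_measure R).
Notation RT := (measurableTypeR R).
Notation V := 'rV[R]_d.

Context {gam v a : R -> V} {c : R}.
Hypothesis hW : W22 gam v a.
Hypothesis c_gt0 : 0 < c.
Hypothesis speed : forall t, 0 <= t <= 1 -> enorm (v t) = c.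

Lemma curve_increment i s t : 0 <= s -> s <= t -> t <= 1 ->
  (gam t - gam s) ord0 i = \int[mu]_(x in (`[s, t] : set RT)) Defs.comp v i x.
Proof. by rewrite !mxE; have [h1 h2] := hW.1 i; exact: (primitive_increment h1 h2). Qed.

Lemma velocity_increment i s t : 0 <= s -> s <= t -> t <= 1 ->
  (v t - v s) ord0 i = \int[mu]_(x in (`[s, t] : set RT)) Defs.comp a i x.
Proof. by rewrite !mxE; have [h1 h2] := hW.2.1 i; exact: (primitive_increment h1 h2). Qed.

Lemma dot_curve_increment (p : V) {s t} : 0 <= s -> s <= t -> t <= 1 ->
  mu.-integrable (`[s, t] : set RT) (EFin \o (fun x => dot (v x) p)) /\
  dot (gam t - gam s) p = \int[mu]_(x in (`[s, t] : set RT)) dot (v x) p.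
Proof.
move=> s0 st t1; have mI : measurable (`[s, t] : set RT) by [].
have hF i : mu.-integrable (`[s, t] : set RT)
    (EFin \o (fun x => Defs.comp v i x * p ord0 i)).
  apply: (eq_integrable mI (EFin \o (fun x => p ord0 i * Defs.comp v i x))).
    by move=> x _; rewrite /= mulrC.
  by apply: integrableRZ => //; apply: integrable_subitv => //; exact: (hW.1 i).1.
have [H1 H2] := Rintegral_big mI (index_enum (ordinal d)) _ hF.
split=> //; rewrite /dot H2; apply: eq_bigr => i _.
rewrite curve_increment // RintegralZr //.
by apply: integrable_subitv => //; exact: (hW.1 i).1.
Qed.

(* Chord bound: with w = gam(t) - gam(s), |w|^2 = int_s^t v.w <= c (t - s) |w|. *)
Lemma chord_le s t : 0 <= s -> s <= t -> t <= 1 ->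
  enorm (gam t - gam s) <= c * (t - s).
Proof.
move=> s0 st t1; set w := gam t - gam s.
have [hint hdot] := dot_curve_increment w s0 st t1.
have : enorm w ^+ 2 <= enorm w * c * (t - s).
  rewrite -dot_self hdot -Rintegral_itv_cst //.
  apply: le_Rintegral => //; first exact: integrable_itv_cst.
  by move=> x /(in_unit_itv s0 t1) /speed <-; rewrite mulrC dot_le.
have := enorm_ge0 w; have : 0 <= c * (t - s) by rewrite mulr_ge0 ?subr_ge0 // ltW.
nra.
Qed.

(* The velocity is 1/2-Hoelder: |v(x) - v(s)|^2 <= (x - s) int_0^1 |a|^2,
   by the Cauchy-Schwarz inequality applied to each coordinate. *)
Lemma velocity_increment_sq {s x} : 0 <= s -> s <= x -> x <= 1 ->
  enorm (v x - v s) ^+ 2 <= (x - s) * acc_energy a.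
Proof.
move=> s0 sx x1; have [<-|sx'] := eqVneq s x.
  by rewrite !subrr mul0r enorm_sq big1 // => i _; rewrite mxE expr0n.
have ltsx : s < x by rewrite lt_neqAle sx' sx.
rewrite enorm_sq /acc_energy mulr_sumr; apply: ler_sum => i _.
rewrite velocity_increment //.
have hai : mu.-integrable (`[0, 1] : set RT) (EFin \o Defs.comp a i) := (hW.2.1 i).1.
apply: le_trans (Rintegral_sqr_le ltsx (integrable_subitv s0 x1 hai)
  (integrable_subitv s0 x1 (hW.2.2 i))) _.
rewrite ler_wpM2l ?subr_ge0 //.
by apply: Rintegral_subitv_le => // [|y]; [exact: (hW.2.2 i)|exact: sqr_ge0].
Qed.

(* Lower chord bound: testing the chord against v(s) and using
   v(x).v(s) = c^2 - |v(x) - v(s)|^2 / 2 >= c^2 - (t - s) E / 2. *)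
Lemma chord_ge s t : 0 <= s -> s <= t -> t <= 1 ->
  (t - s) * (c ^+ 2 - (t - s) * acc_energy a / 2) <= c * enorm (gam t - gam s).
Proof.
move=> s0 st t1; have s01 : 0 <= s <= 1 by rewrite s0 (le_trans st t1).
have [hint hdot] := dot_curve_increment (v s) s0 st t1.
apply: (@le_trans _ _ (dot (gam t - gam s) (v s))); last first.
  by rewrite mulrC -(speed _ s01) dot_le.
rewrite hdot mulrC -Rintegral_itv_cst //.
apply: le_Rintegral => //; first exact: integrable_itv_cst.
move=> x xst; have /andP[sx xt] : s <= x <= t by move: xst; rewrite /= in_itv.
have hx := speed _ (in_unit_itv s0 t1 xst).
have := enorm_sq_sub (v x) (v s); rewrite hx (speed _ s01).
have := velocity_increment_sq s0 sx (le_trans xt t1).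
have := acc_energy_ge0 a; nra.
Qed.

Lemma var_sum_le_speed n t : partition01 n t -> var_sum gam n t <= c.
Proof.
move=> hp; apply: (@le_trans _ _ (\sum_(j < n) c * (t j.+1 - t j))).
  by apply: ler_sum => j _; have [? ? ?] := partition_step hp _ (ltn_ord j); exact: chord_le.
by rewrite -mulr_sumr (partition_telescope hp) mulr1.
Qed.

Lemma var_sum_unif_ge {m} : (0 < m)%N ->
  c - acc_energy a / (2 * c * m%:R) <= var_sum gam m (unif m).
Proof.
move=> m0; have hp : partition01 m (@unif R m) := unif_partition m0.
have mp : (0 : R) < m%:R by rewrite ltr0n.
have step (j : 'I_m) : m%:R^-1 * (c ^+ 2 - m%:R^-1 * acc_energy a / 2) <=
    c * enorm (gam (unif m j.+1) - gam (unif m j)).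
  have [? ? ?] := partition_step hp _ (ltn_ord j).
  by rewrite -(unif_step j m0); exact: chord_ge.
rewrite -(ler_pM2l c_gt0) /var_sum mulr_sumr.
apply: le_trans (ler_sum _ (fun j _ => step j)).
rewrite sumr_const card_ord -mulr_natr le_eqVlt; apply/orP; left; apply/eqP.
by field; rewrite !gt_eqF.
Qed.

Lemma curve_length_const_speed : curve_length gam = c%:E.
Proof.
apply/eqP; rewrite eq_le curve_length_le /=; last exact: var_sum_le_speed.
apply/lee_addgt0Pr => e e0.
have E0 : 0 <= acc_energy a / (2 * c) by rewrite divr_ge0 ?acc_energy_ge0 ?mulr_ge0 ?ltW.
have [m [m0 hm]] := exists_frac_le E0 e0.
have hp : partition01 m (@unif R m) := unif_partition m0.
apply: (le_trans _ (leeD2r e%:E (curve_length_ge gam hp))).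
rewrite -EFinD lee_fin -lerBlDr.
apply: le_trans (var_sum_unif_ge m0).
by rewrite lerD2l lerN2 invfM mulrA.
Qed.

(* Since |kappa| = |a| / c^2 on [0,1], the curvature energy is E / c^4. *)
Lemma acc_energy_le {K} : (curv_energy v a <= K%:E)%E -> acc_energy a <= K * c ^+ 4.
Proof.
move=> hK; have mI : measurable (`[0, 1] : set RT) by [].
have [H1 H2] := Rintegral_big mI (index_enum (ordinal d)) _ (fun i => hW.2.2 i).
have c4 : 0 < c ^+ 4 by rewrite exprn_gt0.
have hZ := integrableRZ mI (c ^+ 4)^-1 H1.
have hE : curv_energy v a = ((c ^+ 4)^-1 * acc_energy a)%:E.
  transitivity (\int[mu]_(x in (`[0%R, 1%R] : set RT))
      (EFin \o (fun x => ((c ^+ 4)^-1 * \sum_(i < d) Defs.comp a i x ^+ 2)%R)) x)%E.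
    apply: eq_integral => x; rewrite inE => /(in_unit_itv (lexx 0) (lexx 1)) x01.
    by rewrite /= speed // expr_div_n enorm_sq -exprM mulrC.
  rewrite -(fineK (integrable_fin_num _ hZ)) //.
  by congr EFin; rewrite -/(Rintegral _ _ _) RintegralZl // H2.
rewrite hE lee_fin ler_pdivrMl // in hK.
by rewrite mulrC.
Qed.

Lemma var_sum_unif_ge_curv {K m} : (curv_energy v a <= K%:E)%E -> (0 < m)%N ->
  c - K * c ^+ 3 / 2 / m%:R <= var_sum gam m (unif m).
Proof.
move=> hK m0; apply: le_trans (var_sum_unif_ge m0).
have mp : (0 : R) < m%:R by rewrite ltr0n.
have hpos : 0 <= (2 * c * m%:R)^-1 by rewrite invr_ge0 !mulr_ge0 ?ltW.
rewrite lerD2l lerN2; apply: le_trans (ler_wpM2r hpos (acc_energy_le hK)) _.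
by rewrite le_eqVlt; apply/orP; left; apply/eqP; field; rewrite !gt_eqF.
Qed.

End ConstantSpeed.

Section LengthLimit.
Context {R : realType} {d : nat}.
Notation V := 'rV[R]_d.

Lemma var_sum_cvg (gam : nat -> R -> V) (gamma : R -> V) n t :
  (forall e : R, 0 < e -> \forall k \near \oo,
     forall x, 0 <= x <= 1 -> enorm (gam k x - gamma x) < e) ->
  partition01 n t -> var_sum (gam k) n t @[k --> \oo] --> var_sum gamma n t.
Proof.
move=> hunif hp; apply/cvgrPdist_le => e e0.
have np : (0 : R) < n%:R + 1 by rewrite ltr_wpDl // ler0n.
have e'0 : 0 < e / (2 * (n%:R + 1)) by rewrite divr_gt0 // mulr_gt0.
apply: filterS (hunif _ e'0) => k hk.
rewrite distrC; apply: le_trans (var_sum_close hp (fun x hx => ltW (hk x hx))) _.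
rewrite [X in X <= _](_ : _ = e * (n%:R / (n%:R + 1))); last by field; rewrite gt_eqF.
by rewrite ger_pMr // ler_pdivrMr // mul1r lerDl.
Qed.

Lemma cvg_curve_length (gam : nat -> R -> V) (gamma : R -> V) (c : nat -> R) (M B : R) :
  (forall n t, partition01 n t -> var_sum (gam k) n t @[k --> \oo] --> var_sum gamma n t) ->
  (forall k n t, partition01 n t -> var_sum (gam k) n t <= c k) ->
  (forall k m, (0 < m)%N -> c k - B / m%:R <= var_sum (gam k) m (unif m)) ->
  (forall k, c k <= M) -> 0 <= B ->
  (c k)%:E @[k --> \oo] --> curve_length gamma.
Proof.
move=> hcvg hup hlow hM B0.
have gammaM n t : partition01 n t -> var_sum gamma n t <= M.
  move=> hp; apply: (cvgr_to_le (hcvg _ _ hp)).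
  by apply: nearW => k; exact: le_trans (hup k _ _ hp) (hM k).
have hp1 : partition01 1 (@unif R 1) := unif_partition (ltn0Sn 0).
have [L hL] : exists L, curve_length gamma = L%:E.
  exists (fine (curve_length gamma)); rewrite fineK // ge0_fin_numE.
    by rewrite (le_lt_trans (curve_length_le gammaM)) ?ltry.
  by apply: le_trans (curve_length_ge gamma hp1); rewrite lee_fin var_sum_ge0.
rewrite hL; apply: cvg_EFin; first exact: nearW.
apply/cvgrPdist_lt => e e0.
have e20 : 0 < e / 2 by rewrite divr_gt0.
have : ((L - e)%:E < curve_length gamma)%E by rewrite hL lte_fin gtrBl.
move=> /ereal_sup_gt[_ [n0 [t0 [hp0 ->]]]]; rewrite lte_fin => hgt.
have [m [m0 hm]] := exists_frac_le B0 e20.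
have hpm : partition01 m (@unif R m) := unif_partition m0.
have hleL : var_sum gamma m (unif m) < L + e / 2.
  have := curve_length_ge gamma hpm; rewrite hL lee_fin => h.
  by rewrite (le_lt_trans h) // ltrDl.
apply: filterS2 (cvgr_gt _ (hcvg _ _ hp0) _ hgt) (cvgr_lt _ (hcvg _ _ hpm) _ hleL).
move=> k h1 h2; have := hup k _ _ hp0; have := hlow k _ m0.
by rewrite /= ltr_norml; lra.
Qed.

End LengthLimit.

Theorem lemma2p2 (R : realType) (d : nat)
  (gam g1 g2 : nat -> R -> 'rV[R]_d) (gamma : R -> 'rV[R]_d) :
  (forall n, W22 (gam n) (g1 n) (g2 n)) ->
  (forall n, exists2 c : R, 0 < c &
     forall t, 0 <= t <= 1 -> enorm (g1 n t) = c) ->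
  (forall e : R, 0 < e -> \forall n \near \oo,
     forall t, 0 <= t <= 1 -> enorm (gam n t - gamma t) < e) ->
  (exists M : R, forall n t, 0 <= t <= 1 -> enorm (g1 n t) <= M) ->
  (exists K : R, forall n, (curv_energy (g1 n) (g2 n) <= K%:E)%E) ->
  (fun n => curve_length (gam n)) @ \oo --> curve_length gamma.
Proof.
move=> hW hspeed hunif [M hM] [K hK].
have [c hc] : {c : nat -> R & forall n, 0 < c n /\
    forall t, 0 <= t <= 1 -> enorm (g1 n t) = c n}.
  apply: (@choice _ _ (fun n c => 0 < c /\ forall t, 0 <= t <= 1 -> enorm (g1 n t) = c)).
  by move=> n; have [c c0 hc] := hspeed n; exists c.
have c_gt0 n : 0 < c n := (hc n).1.
have speed n : forall t, 0 <= t <= 1 -> enorm (g1 n t) = c n := (hc n).2.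
have cM n : c n <= M by rewrite -(speed n 0) ?lexx ?ler01 // hM ?lexx ?ler01.
have M0 : 0 <= M := le_trans (ltW (c_gt0 0%N)) (cM 0%N).
have K0 : 0 <= K.
  have := le_trans (acc_energy_ge0 _) (acc_energy_le (hW 0%N) (c_gt0 0%N) (speed 0%N) (hK 0%N)).
  by rewrite pmulr_lge0 // exprn_gt0.
have -> : (fun n => curve_length (gam n)) = (fun n => (c n)%:E).
  by apply: funext => n; exact: curve_length_const_speed (hW n) (c_gt0 n) (speed n).
apply: (cvg_curve_length gam _ _ M (K * M ^+ 3 / 2)).
- by move=> n t; exact: var_sum_cvg.
- by move=> k; exact: var_sum_le_speed (hW k) (c_gt0 k) (speed k).
- move=> k m m0; apply: le_trans (var_sum_unif_ge_curv (hW k) (c_gt0 k) (speed k) (hK k) m0).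
  rewrite lerD2l lerN2; apply: ler_wpM2r; first by rewrite invr_ge0 ler0n.
  apply: ler_wpM2r => //; apply: ler_wpM2l => //.
  by rewrite ler_pXn2r // nnegrE ltW.
- exact: cM.
- by apply: divr_ge0 => //; apply: mulr_ge0 => //; exact: exprn_ge0.
Qed.
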